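(* Let $n\ge 1$ and let $\epsilon_n=e^{2\pi\sqrt{-1}/n}$. Define \[ \Psi_n(X_0,\dots,X_{n-1})=\prod_{i\in(\mathbb Z/n\mathbb Z)^\times}\Bigl(\sum_{j\in\mathbb Z/n\mathbb Z}\epsilon_n^{ij}X_j\Bigr). \] Let the symmetric group $S_n$, viewed as the permutation group of $\mathbb Z/n\mathbb Z=\{0,1,\dots,n-1\}$, act on $\mathbb C[X_0,\dots,X_{n-1}]$ by $\sigma(X_j)=X_{\sigma(j)}$, and let $\mathrm{Stab}(\Psi_n)=\{\sigma\in S_n:\sigma(\Psi_n)=\Psi_n\}$. Then $\mathrm{Stab}(\Psi_n)=\{\mathrm{id}\}$ if $n=1,2$, and $\mathrm{Stab}(\Psi_n)=G_n$ if $n>2$, where $G_n=\{\alpha_{a,b}: a\in(\mathbb Z/n\mathbb Z)^\times,\ b\in\mathbb Z/n\mathbb Z\}$ and $\alpha_{a,b}$ is the permutation $x\mapsto ax+b$ of $\mathbb Z/n\mathbb Z$.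
   Context: $G_n$ is the affine group $\mathrm{AGL}(1,\mathbb Z/n\mathbb Z)$ viewed as a subgroup of $S_n$. *)

From HB Require Import structures.
From mathcomp Require Import all_boot all_order all_algebra all_fingroup all_field.
From mathcomp Require Import mpoly.
Set Implicit Arguments. Unset Strict Implicit. Unset Printing Implicit Defensive.
Import GRing.Theory Num.Theory.
Local Open Scope ring_scope.

(* eps_n = exp(2*pi*sqrt(-1)/n): n.-root (-1) is the n-th root of -1 with
   minimal non-negative argument, i.e. exp(i*pi/n); its square is exp(2 i pi/n).
   (For n = 1: 1.-root(-1) = -1, square = 1.) *)
Definition eps (n : nat) : algC := (n.-root (-1)) ^+ 2.

(* Z/nZ is represented by 'I_n (n >= 1), with arithmetic mod n;
   the units of Z/nZ are the i with coprime i n (for n = 1, i = 0). *)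
Definition Psi (n : nat) : {mpoly algC[n]} :=
  \prod_(i : 'I_n | coprime i n) \sum_(j : 'I_n) (eps n ^+ (i * j)%N) *: 'X_j.

(* Stabilizer of Psi_n under sigma(X_j) = X_(sigma j) (this is mpoly's msym). *)
Definition StabPsi (n : nat) : {set 'S_n} :=
  [set s : 'S_n | msym s (Psi n) == Psi n].

Definition Gaff (n : nat) : {set 'S_n} :=
  [set s : 'S_n | [exists a : 'I_n, exists b : 'I_n,
     coprime a n && [forall x : 'I_n, nat_of_ord (s x) == (a * x + b) %% n]%N]].

(* Write L_i = \sum_j eps^(i j) X_j, so that Psi_n is the product of the L_i over the
   units i. If sigma x = a x + b with a a unit, then sigma (L_(c a)) = eps^(- c b) L_c;
   the product of these scalars is 1 because for n > 2 the units of Z/nZ pair off as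
   i, n - i, so their sum is divisible by n. For n = 2 the translation x |-> x + 1
   negates Psi_2 = X_0 - X_1.
   Conversely, if sigma fixes Psi_n, the product of the L_i vanishes on the hyperplane
   sigma^-1 (L_1) = \sum_k eps^(sigma k) X_k = 0. Over an infinite field such a product
   has a factor proportional to the equation of the hyperplane, so for some unit i the
   coefficients eps^(sigma k) are proportional to eps^(i k), i.e. sigma k = i k + sigma 0.
   Both directions need eps_n to be a primitive n-th root of unity, i.e. that
   n.-root (-1), the root of X^n + 1 of largest real part, generates all the roots of
   X^n + 1; this follows from an extremal argument on real parts on the unit circle. *)

Set Warnings "-notation-overridden -ambiguous-paths -notation-incompatible-prefix".
From HB Require Import structures.
From mathcomp Require Import all_boot all_order all_algebra all_fingroup all_field.
From mathcomp Require Import mpoly.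
From mathcomp Require Import cyclic ring zify.
Set Implicit Arguments. Unset Strict Implicit. Unset Printing Implicit Defensive.
Import Order.TTheory GRing.Theory Num.Theory.
Local Open Scope ring_scope.

Section UnitCircle.
Variable C : numClosedFieldType.
Implicit Types x y z u w : C.

Lemma norm1_neq0 y : `|y| = 1 -> y != 0.
Proof. by move=> y1; rewrite -normr_eq0 y1 oner_neq0. Qed.

Lemma Re_norm1E y : `|y| = 1 -> 'Re y = (y + y^-1) / 2.
Proof. by move=> y1; rewrite ReE [y^-1]invC_norm y1 expr1n invr1 mul1r. Qed.

Lemma norm1M x u : `|x| = 1 -> `|u| = 1 -> `|x * u| = 1.
Proof. by move=> x1 u1; rewrite normrM x1 u1 mulr1. Qed.

Lemma norm1V u : `|u| = 1 -> `|u^-1| = 1.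
Proof. by move=> u1; rewrite normrV ?unitfE ?norm1_neq0 // u1 invr1. Qed.

Lemma Re_norm1_sqr x : `|x| = 1 -> 'Re (x ^+ 2) = 2 * 'Re x ^+ 2 - 1.
Proof.
move=> x1; have x0 := norm1_neq0 x1.
by rewrite !Re_norm1E ?normrX ?x1 ?expr1n // -exprVn; field.
Qed.

Lemma Re_norm1_sumMV x u : `|x| = 1 -> `|u| = 1 ->
  'Re (x * u) + 'Re (x / u) = 2 * 'Re x * 'Re u.
Proof.
move=> x1 u1; have x0 := norm1_neq0 x1; have u0 := norm1_neq0 u1.
by rewrite !Re_norm1E ?norm1M ?norm1V //; field; rewrite x0 u0.
Qed.

Lemma Re_norm1_gapMV x u : `|x| = 1 -> `|u| = 1 ->
  ('Re x - 'Re (x * u)) * ('Re x - 'Re (x / u)) = (1 - 'Re u) * ('Re (x ^+ 2) - 'Re u).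
Proof.
move=> x1 u1; have x0 := norm1_neq0 x1; have u0 := norm1_neq0 u1.
rewrite !Re_norm1E ?norm1M ?norm1V ?normrX ?x1 ?expr1n // -exprVn.
by field; rewrite x0 u0.
Qed.

Lemma Re_norm1_lt1 w : `|w| = 1 -> w != 1 -> 'Re w < 1.
Proof.
move=> w1 w_neq1; have [Rew_le eq_Rew] := leif_Re_Creal w.
rewrite w1 in Rew_le eq_Rew; rewrite lt_neqAle Rew_le andbT eq_Rew.
by apply: contra w_neq1 => /ger0_norm; rewrite w1 => <-.
Qed.

Lemma Re_norm1_eq y z : `|y| = 1 -> `|z| = 1 -> 'Re y = 'Re z -> y = z \/ y = z^-1.
Proof.
move=> y1 z1; have y0 := norm1_neq0 y1; have z0 := norm1_neq0 z1.
rewrite !Re_norm1E // => /(congr1 (fun t => t * 2)); rewrite !divfK ?pnatr_eq0 // => eq_yz.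
have : (y - z) * (y - z^-1) == 0.
  apply/eqP; have -> : (y - z) * (y - z^-1) = y * (y + y^-1 - (z + z^-1)).
    by field; rewrite y0 z0.
  by rewrite eq_yz subrr mulr0.
by rewrite mulf_eq0 !subr_eq0 => /orP[] /eqP; [left | right].
Qed.

Lemma Re_norm1_local_max x w : `|x| = 1 -> `|w| = 1 -> w != 1 ->
  'Re (x * w) <= 'Re x -> 'Re (x / w) <= 'Re x -> 0 <= 'Re x /\ 'Re w <= 'Re (x ^+ 2).
Proof.
move=> x1 w1 w_neq1 le_xw le_xVw.
have gap_gt0 : 0 < 1 - 'Re w by rewrite subr_gt0 Re_norm1_lt1.
split.
  have := lerD le_xw le_xVw; rewrite Re_norm1_sumMV // -subr_ge0.
  have -> : 'Re x + 'Re x - 2 * 'Re x * 'Re w = 2 * (1 - 'Re w) * 'Re x by ring.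
  by rewrite pmulr_rge0 // mulr_gt0.
have gap_xw : 0 <= 'Re x - 'Re (x * w) by rewrite subr_ge0.
have gap_xVw : 0 <= 'Re x - 'Re (x / w) by rewrite subr_ge0.
by have := mulr_ge0 gap_xw gap_xVw; rewrite Re_norm1_gapMV // pmulr_rge0 // subr_ge0.
Qed.
End UnitCircle.

Lemma exists_real_max (T : eqType) (R : numDomainType) (f : T -> R) (s : seq T) x0 :
  x0 \in s -> {in s, forall x, f x \is Num.real} ->
  exists2 x, x \in s & {in s, forall y, f y <= f x}.
Proof.
elim: s x0 => [//|a s IH] x0 _ s_real.
have a_real := s_real a (mem_head a s).
case: s IH s_real => [_ _ | b s IH s_real].
  by exists a; rewrite ?mem_head // => y /[1!inE] /eqP ->.
have bs_sub : {subset b :: s <= [:: a, b & s]} by move=> y ys; rewrite inE ys orbT.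
have [x xs x_max] := IH b (mem_head b s) (fun y ys => s_real y (bs_sub y ys)).
have [le_ax | lt_xa] := real_leP a_real (s_real x (bs_sub x xs)).
  by exists x; [exact: bs_sub | move=> y /[1!inE] /predU1P[-> // | /x_max]].
exists a; first exact: mem_head.
move=> y /[1!inE] /predU1P[-> // | /x_max le_yx].
exact: le_trans le_yx (ltW lt_xa).
Qed.

Lemma rootC_Re_max_real (C : numClosedFieldType) n (x y : C) :
  (0 < n)%N -> x \is Num.real -> y ^+ n = x -> 'Re y <= 'Re (n.-root x).
Proof.
move=> n_gt0 x_real yn; have [Im_ge0 | Im_lt0] := real_ge0P (Creal_Im y).
  exact: rootC_Re_max.
rewrite -Re_conj; apply: rootC_Re_max n_gt0 _ _.
  by rewrite -rmorphXn yn; apply/CrealP.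
by rewrite Im_conj oppr_ge0 ltW.
Qed.

Lemma norm1_rootN1 (C : numClosedFieldType) n (y : C) :
  (0 < n)%N -> y ^+ n = -1 -> `|y| = 1.
Proof.
move=> n_gt0 yn; apply/eqP; rewrite -(pexpr_eq1 n_gt0) ?normr_ge0 //.
by rewrite -normrX yn normrN1.
Qed.

Lemma prim_root_double_of_pow (R : idomainType) n (z zeta : R) m :
  n.-primitive_root zeta -> zeta = z ^+ m -> z ^+ (2 * n) = 1 -> z ^+ n != 1 ->
  (2 * n).-primitive_root z.
Proof.
move=> zeta_prim zetaE z2n zn_neq1; have n_gt0 := prim_order_gt0 zeta_prim.
have n2_gt0 : (0 < 2 * n)%N by rewrite muln_gt0 n_gt0.
have [d z_prim d_dvd] := prim_order_exists n2_gt0 z2n.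
have /dvdnP[t dE] : (n %| d)%N.
  by rewrite (prim_order_dvd zeta_prim) zetaE exprAC (prim_expr_order z_prim) expr1n.
have t_dvd2 : (t %| 2)%N by rewrite -(dvdn_pmul2r n_gt0) -dE.
have d_ndvd : ~~ (d %| n)%N by rewrite (prim_order_dvd z_prim).
case: t dE t_dvd2 => [|[|[|t]]] dE // _.
- by rewrite dE mul1n dvdnn in d_ndvd.
- by rewrite -dE.
Qed.

Lemma rootN1_Re_max_eq (C : numClosedFieldType) n (z y : C) :
  (0 < n)%N -> z ^+ n = -1 -> y ^+ n = -1 ->
  (forall w, w ^+ n = -1 -> 'Re w <= 'Re z) ->
  'Re (y * z ^+ 2) <= 'Re y -> 'Re (y / z ^+ 2) <= 'Re y -> y = z \/ y = z^-1.
Proof.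
move=> n_gt0 zn yn z_max le_yz2 le_yVz2.
have z1 := norm1_rootN1 n_gt0 zn; have y1 := norm1_rootN1 n_gt0 yn.
suff le_zy : 'Re z <= 'Re y.
  by apply: Re_norm1_eq => //; apply/le_anti; rewrite z_max ?le_zy.
have [z2_eq1 | z2_neq1] := eqVneq (z ^+ 2) 1.
  have -> : z = -1.
    have /eqP : (z - 1) * (z + 1) = 0 by rewrite -subr_sqr z2_eq1 expr1n subrr.
    rewrite mulf_eq0 subr_eq0 addr_eq0 => /orP[/eqP z_eq1 | /eqP //].
    by move: zn; rewrite z_eq1 expr1n => /eqP; rewrite eq_sym eqNr oner_eq0.
  have [] := leif_normC_Re_Creal y.
  by rewrite (Creal_ReP _ (rpredN1 _)) y1 real_ler_norml ?Creal_Re // => /andP[].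
have z2_1 : `|z ^+ 2| = 1 by rewrite normrX z1 expr1n.
have [Rey_ge0] := Re_norm1_local_max y1 z2_1 z2_neq1 le_yz2 le_yVz2.
rewrite !Re_norm1_sqr // lerD2r ler_pM2l // => le_sqr.
apply: le_trans (real_ler_norm (Creal_Re z)) _.
by rewrite -ler_sqr ?nnegrE ?normr_ge0 // real_normK ?Creal_Re.
Qed.

(* If [z] were not primitive, the roots of [X^n + 1] outside the powers of [z] would
   form a nonempty set stable under multiplication by [z^2] and [z^-2]; one of them of
   maximal real part is a local maximum, hence [z] or [z^-1], a contradiction. *)
Lemma prim_rootCN1 n : (0 < n)%N -> (2 * n).-primitive_root (n.-root (-1 : algC)).
Proof.
move=> n_gt0; set z := n.-root (-1 : algC).
have zn : z ^+ n = -1 by apply: rootCK.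
have z0 : z != 0 by rewrite -normr_eq0 (norm1_rootN1 n_gt0 zn) oner_neq0.
have z2n : z ^+ (2 * n) = 1 by rewrite mulnC exprM zn sqrrN expr1n.
pose powz := [seq z ^+ k | k <- iota 0 (2 * n)].
have powzX k : z ^+ k \in powz.
  by rewrite -(expr_mod k z2n) map_f // mem_iota ltn_mod muln_gt0 n_gt0.
have powzM y k : y \in powz -> y * z ^+ k \in powz.
  by case/mapP => j _ ->; rewrite -exprD powzX.
have powzMK y k : y * z ^+ k \in powz -> y \in powz.
  move/(powzM _ ((2 * n).-1 * k)); rewrite -mulrA -exprD -mulSn prednK.
    by rewrite exprM z2n expr1n mulr1.
  by rewrite muln_gt0 n_gt0.
have [zeta zeta_prim] := C_prim_root_exists n_gt0.
pose A := [seq y <- [seq z * zeta ^+ i | i <- iota 0 n] | y \notin powz].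
have memA y : (y \in A) = (y ^+ n == -1) && (y \notin powz).
  rewrite mem_filter andbC; congr (_ && _); apply/mapP/eqP => [[i _ ->] | yn].
    by rewrite exprMn zn exprAC (prim_expr_order zeta_prim) expr1n mulr1.
  have /(prim_rootP zeta_prim)[i zetaE] : (y / z) ^+ n = 1.
    by rewrite expr_div_n yn zn divff // oppr_eq0 oner_neq0.
  by exists (val i); rewrite ?mem_iota ?ltn_ord // -zetaE mulrC divfK.
apply/idPn => z_nprim.
have zzetaA : z * zeta \in A.
  rewrite memA exprMn zn (prim_expr_order zeta_prim) mulr1 eqxx /=.
  apply: contra z_nprim; rewrite mulrC => /(powzMK zeta 1) /mapP[k _ zetaE].
  by apply: prim_root_double_of_pow zeta_prim zetaE z2n _; rewrite zn eqNr oner_eq0.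
have [y yA y_max] := exists_real_max zzetaA (fun y _ => Creal_Re y).
move: yA; rewrite memA => /andP[/eqP yn y_npow].
have yz2A : y * z ^+ 2 \in A.
  rewrite memA exprMn yn -exprM z2n mulr1 eqxx /=.
  by apply: contra y_npow; apply: powzMK.
have yVz2A : y / z ^+ 2 \in A.
  rewrite memA expr_div_n yn -exprM z2n divr1 eqxx /=.
  by apply: contra y_npow => /(powzM _ 2); rewrite divfK ?expf_neq0.
have z_max w : w ^+ n = -1 -> 'Re w <= 'Re z.
  by apply: rootC_Re_max_real; rewrite ?rpredN1.
move/negP: y_npow; apply.
have [-> | ->] := rootN1_Re_max_eq n_gt0 zn yn z_max (y_max _ yz2A) (y_max _ yVz2A).
  by rewrite -(expr1 z) powzX.
by apply: (powzMK _ 1); rewrite expr1 mulVf // -(expr0 z) powzX.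
Qed.

Lemma eps_prim n : (0 < n)%N -> n.-primitive_root (eps n).
Proof.
move=> n_gt0; have := dvdn_prim_root (prim_rootCN1 n_gt0) (dvdn_mull 2 (dvdnn n)).
by rewrite mulnK.
Qed.

Lemma exists_notin (R : numDomainType) (s : seq R) : exists t, t \notin s.
Proof.
pose nats := [seq i%:R | i <- iota 0 (size s).+1] : seq R.
have nats_uniq : uniq nats.
  by rewrite map_inj_uniq ?iota_uniq // => i j /eqP; rewrite eqr_nat => /eqP.
have [/allP nats_sub | /allPn[t _ t_notin]] := boolP (all (mem s) nats); last by exists t.
by have := uniq_leq_size nats_uniq nats_sub; rewrite size_map size_iota ltnn.
Qed.

Lemma sum_delta (R : pzSemiRingType) m (c : 'I_m -> R) k : \sum_j c j * (j == k)%:R = c k.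
Proof.
rewrite (bigD1 k) //= eqxx mulr1 big1 ?addr0 // => j /negbTE ->.
by rewrite mulr0.
Qed.

Section ProductOfForms.
Variables (F : numFieldType) (m : nat).
Implicit Types (a c v w : 'I_m -> F).

Lemma sum_formD c v w t :
  \sum_k c k * (v k + t * w k) = \sum_k c k * v k + t * \sum_k c k * w k.
Proof. by rewrite mulr_sumr -big_split; apply: eq_bigr => k _; rewrite mulrDr mulrCA. Qed.

(* A vector space over an infinite field is not a finite union of proper subspaces. *)
Lemma kernel_avoid_forms a (I : eqType) (c : I -> 'I_m -> F) (r : seq I) :
  (forall i, i \in r -> exists2 w, \sum_k a k * w k = 0 & \sum_k c i k * w k != 0) ->
  exists2 v, \sum_k a k * v k = 0 & forall i, i \in r -> \sum_k c i k * v k != 0.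
Proof.
elim: r => [|i r IH] c_nz.
  by exists (fun=> 0) => //; rewrite big1 // => k _; rewrite mulr0.
have [v av v_nz] := IH (fun j jr => c_nz j (mem_behead (s := i :: r) jr)).
have [w aw wi_nz] := c_nz i (mem_head i r).
pose bad j := - (\sum_k c j k * v k) / (\sum_k c j k * w k).
have [t t_good] := exists_notin [seq bad j | j <- i :: r].
exists (fun k => v k + t * w k); first by rewrite sum_formD av aw mulr0 addr0.
move=> j jir; rewrite sum_formD.
have [wj0 | wj_nz] := eqVneq (\sum_k c j k * w k) 0.
  rewrite wj0 mulr0 addr0; apply: v_nz.
  by move: jir; rewrite inE => /predU1P[jE | //]; rewrite -jE wj0 eqxx in wi_nz.
apply: contra t_good; rewrite addr_eq0 => /eqP vE; apply/mapP; exists j => //.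
by rewrite /bad vE opprK mulfK.
Qed.

Lemma prod_forms_vanish_on_kernel a (I : finType) (P : pred I) (c : I -> 'I_m -> F) :
  (forall v, \sum_k a k * v k = 0 -> \prod_(i | P i) \sum_k c i k * v k = 0) ->
  exists2 i, P i & forall k l, c i k * a l = a k * c i l.
Proof.
move=> prod_vanish.
have [/exists_inP[i Pi /forallP c_prop] | no_prop] :=
  boolP [exists (i | P i), [forall k, forall l, c i k * a l == a k * c i l]].
  by exists i => // k l; apply/eqP/(forallP (c_prop k)).
have c_nz i : i \in [seq i <- index_enum I | P i] ->
    exists2 w, \sum_k a k * w k = 0 & \sum_k c i k * w k != 0.
  rewrite mem_filter => /andP[Pi _].
  have /forallPn[k /forallPn[l ckl]] : ~~ [forall k, forall l, c i k * a l == a k * c i l].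
    by apply: contra no_prop => c_prop; apply/exists_inP; exists i.
  have pair_form e :
      \sum_j e j * ((j == k)%:R * a l - (j == l)%:R * a k) = e k * a l - e l * a k.
    by under eq_bigr do rewrite mulrBr !mulrA; rewrite sumrB -!mulr_suml !sum_delta.
  exists (fun j => (j == k)%:R * a l - (j == l)%:R * a k); rewrite pair_form.
    by rewrite mulrC subrr.
  by rewrite subr_eq0 [c i l * _]mulrC.
have [v av v_nz] := kernel_avoid_forms c_nz.
have prod_nz : \prod_(i | P i) \sum_k c i k * v k != 0.
  rewrite prodf_seq_neq0; apply/allP => i _; apply/implyP => Pi.
  by apply: v_nz; rewrite mem_filter Pi mem_index_enum.
by rewrite prod_vanish ?eqxx in prod_nz.
Qed.

End ProductOfForms.

Lemma meval_msym n (R : comNzRingType) (v : 'I_n -> R) (s : 'S_n) (p : {mpoly R[n]}) :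
  meval v (msym s p) = meval (v \o s) p.
Proof.
rewrite -[msym s p]comp_mpoly_id msym_mPo comp_mpoly_meval; apply: meval_eq => i.
by rewrite !tnth_mktuple mevalXU.
Qed.

Lemma meval_Psi n (v : 'I_n -> algC) :
  meval v (Psi n) = \prod_(i : 'I_n | coprime i n) \sum_(j : 'I_n) eps n ^+ (i * j) * v j.
Proof.
rewrite rmorph_prod; apply: eq_bigr => i _; rewrite raddf_sum; apply: eq_bigr => j _.
by rewrite /= mevalZ mevalXU.
Qed.

Lemma meval_Psi_delta n (l : 'I_n) :
  meval (fun j => (j == l)%:R) (Psi n) = \prod_(i : 'I_n | coprime i n) eps n ^+ (i * l).
Proof.
by rewrite meval_Psi; apply: eq_bigr => i _; rewrite sum_delta.
Qed.

Lemma stabPsi_sub_Gaff n (s : 'S_n) :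
  (1 < n)%N -> msym s (Psi n) = Psi n -> s \in Gaff n.
Proof.
move=> n_gt1 s_fix; have n_gt0 := ltnW n_gt1.
have sV_fix v : meval v (Psi n) = meval (v \o (s^-1)%g) (Psi n).
  by rewrite -meval_msym -{2}s_fix -msymMm mulgV msym1m.
pose k0 : 'I_n := Ordinal n_gt0; pose i1 : 'I_n := Ordinal n_gt1.
have ker_vanish v : \sum_(k : 'I_n) eps n ^+ s k * v k = 0 ->
    \prod_(i : 'I_n | coprime i n) \sum_(k : 'I_n) eps n ^+ (i * k) * v k = 0.
  move=> av; rewrite -meval_Psi sV_fix meval_Psi (bigD1 i1) ?coprime1n //=.
  rewrite (reindex_inj (@perm_inj _ s)) /=.
  by under eq_bigr do rewrite mul1n permK; rewrite av mul0r.
have [i i_unit i_prop] := prod_forms_vanish_on_kernel ker_vanish.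
rewrite inE; apply/existsP; exists i; apply/existsP; exists (s k0); rewrite i_unit /=.
apply/forallP => k; have /eqP := i_prop k k0; rewrite muln0 expr0 mulr1 -exprD.
by rewrite (eq_prim_root_expr (eps_prim n_gt0)) (modn_small (ltn_ord (s k))) eq_sym.
Qed.

Lemma stabPsi2_trivial (s : 'S_2) : msym s (Psi 2) = Psi 2 -> s = 1%g.
Proof.
move=> s_fix; apply/permP => k; rewrite perm1.
have := congr1 (meval (fun j => (j == s k)%:R)) s_fix.
rewrite meval_msym (@meval_eq _ _ _ (fun j => (j == k)%:R)) => [|j /=]; last first.
  by rewrite (inj_eq perm_inj).
have units2 : (fun i : 'I_2 => coprime i 2) =1 pred1 ord_max by case=> [[|[|]]].
rewrite !meval_Psi_delta !(big_pred1 _ units2) /= => /eqP.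
by rewrite (eq_prim_root_expr (eps_prim _)) // !mul1n !modn_small // => /eqP/val_inj.
Qed.

Lemma coprime_subl i n : (i <= n)%N -> coprime (n - i) n = coprime i n.
Proof.
by move=> le_in; rewrite /coprime -{2}(subnK le_in) gcdnDl -{2}(subnK le_in) gcdnDr gcdnC.
Qed.

(* The units [i] and [n - i] are distinct for [n > 2], so they pair up with sum [n]. *)
Lemma dvdn_sum_units n : (2 < n)%N -> (n %| \sum_(i < n | coprime i n) i)%N.
Proof.
case: n => // n n_gt2; set p := n.+1.
have unit_gt0 (i : 'I_p) : coprime i p -> (0 < i)%N.
  by rewrite lt0n; apply: contraTneq => ->; rewrite /coprime gcd0n gtn_eqF // ltnW.
have oppE (i : 'I_p) : (0 < i)%N -> nat_of_ord (- i) = (p - i)%N.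
  by move=> i_gt0; rewrite /= modn_small // ltn_subrL i_gt0.
have unitN (i : 'I_p) : coprime (- i) p = coprime i p.
  have [i0 | i_gt0] := posnP i; last by rewrite oppE // coprime_subl // ltnW.
  suff -> : - i = i by [].
  by apply/val_inj; rewrite /= i0 subn0 modnn.
rewrite (bigID (fun i : 'I_p => 2 * i < p)%N) /= [X in (_ + X)%N](reindex_inj oppr_inj).
rewrite [X in (_ + X)%N](eq_bigl (fun i : 'I_p => coprime i p && (2 * i < p)%N)) => [|i].
  rewrite -big_split; apply: dvdn_sum => i /andP[/unit_gt0 i_gt0 _].
  by rewrite oppE //= subnKC // ltnW.
rewrite unitN; case: (boolP (coprime i p)) => // i_unit.
rewrite oppE ?unit_gt0 //=.
have : (2 * i != p)%N.
  apply: contraTneq i_unit => pE; rewrite /coprime -[X in gcdn _ X]pE gcdnMl.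
  by apply/eqP => i1; move: n_gt2; rewrite -/p -pE i1.
move=> half_neq; have := ltn_ord i; clear -half_neq; lia.
Qed.

Lemma eqn_modMr_coprime a n i j : (0 < n)%N -> coprime a n ->
  (i * a == j * a %[mod n]) = (i == j %[mod n]).
Proof.
move=> n_gt0 a_unit.
apply/idP/idP => [/eqP ija | /eqP ij]; last by rewrite -modnMml ij modnMml.
have aV : (a * a ^ (totient n).-1 = 1 %[mod n])%N.
  by rewrite -expnS prednK ?totient_gt0 // Euler_exp_totient.
rewrite -[i]muln1 -[j]muln1 -!(modnMmr _ 1) -aV !modnMmr !mulnA.
by rewrite -(modnMml (i * a)) ija modnMml.
Qed.

Lemma prod_eps_units n b :
  (2 < n)%N -> \prod_(i < n | coprime i n) eps n ^+ (i * b) = 1.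
Proof.
move=> n_gt2; have n_gt0 : (0 < n)%N by apply: ltn_trans n_gt2. rewrite prodrXr -big_distrl /=.
have /dvdnP[q ->] := dvdn_sum_units n_gt2.
by rewrite mulnAC mulnC exprM (prim_expr_order (eps_prim n_gt0)) expr1n.
Qed.

Lemma msymXU n (R : nzRingType) (s : 'S_n) (i : 'I_n) :
  msym s ('X_i : {mpoly R[n]}) = 'X_(s i).
Proof. by rewrite /msym mmapX mmap1U. Qed.

Lemma Gaff_sub_stabPsi n (s : 'S_n) :
  (2 < n)%N -> s \in Gaff n -> msym s (Psi n) = Psi n.
Proof.
move=> n_gt2 /[1!inE] /existsP[a /existsP[b /andP[a_unit /forallP sE]]].
have n_gt0 : (0 < n)%N by apply: ltn_trans n_gt2.
pose mula (c : 'I_n) : 'I_n := Ordinal (ltn_pmod (c * a) n_gt0).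
have mula_inj : injective mula.
  move=> c d /(congr1 val) /eqP; rewrite eqn_modMr_coprime // !modn_small // => /eqP.
  exact: val_inj.
have mula_unit c : coprime (mula c) n = coprime c n.
  by rewrite coprime_modl coprimeMl a_unit andbT.
have factorE (c : 'I_n) : \sum_(k : 'I_n) eps n ^+ (c * k) *: 'X_k
    = eps n ^+ (c * b) *: \sum_(j : 'I_n) eps n ^+ (mula c * j) *: ('X_(s j) : {mpoly algC[n]}).
  rewrite (reindex_inj (@perm_inj _ s)) scaler_sumr; apply: eq_bigr => j _.
  rewrite scalerA -exprD; congr (_ *: _); apply/eqP.
  rewrite (eq_prim_root_expr (eps_prim n_gt0)) (eqP (sE j)) /= modnMmr.
  by rewrite -modnDmr modnMml modnDmr mulnDr addnC mulnA.
have -> : msym s (Psi n) =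
    \prod_(i : 'I_n | coprime i n) \sum_(j : 'I_n) eps n ^+ (i * j) *: 'X_(s j).
  rewrite rmorph_prod; apply: eq_bigr => i _; rewrite raddf_sum; apply: eq_bigr => j _.
  by rewrite /= msymZ msymXU.
rewrite (reindex_inj mula_inj) (eq_bigl _ _ mula_unit) /Psi.
rewrite (eq_bigr _ (fun c _ => factorE c)).
by rewrite scaler_prod prod_eps_units // scale1r.
Qed.

Theorem lemma2p1 (n : nat) (hn : (1 <= n)%N) :
  StabPsi n = (if (n <= 2)%N then [set 1%g] else Gaff n).
Proof.
apply/setP => s; rewrite inE; case: ifPn => [n_le2 | n_gt2].
  rewrite inE; apply/eqP/eqP => [s_fix | ->]; last by rewrite msym1m.
  case: n hn n_le2 s s_fix => [|[|[|//]]] // _ _ s s_fix.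
  - by apply/permP => i; rewrite perm1 !ord1.
  - exact: stabPsi2_trivial.
rewrite -ltnNge in n_gt2; apply/eqP/idP => [s_fix | s_aff].
- exact: stabPsi_sub_Gaff (ltnW n_gt2) s_fix.
- exact: Gaff_sub_stabPsi.
Qed.
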